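(* Let $D$ be a division ring and $R$ a maximal subring of $D$. Then either there exists $\lambda\in D\setminus R$ with $\lambda R\subseteq R\lambda$ (equivalently $R\lambda\subseteq\lambda R$), or $N_l(R)=N_r(R)=N(R)=U(R)\cup\{0\}$.
   Context: All rings are associative unital and subrings share the identity. A maximal subring of a ring $T$ is a proper subring maximal under inclusion among proper subrings of $T$. For a subring $R$ of a division ring $D$: $N_l(R)=\{x\in D: Rx\subseteq xR\}$, $N_r(R)=\{x\in D: xR\subseteq Rx\}$, $N(R)=\{x\in D: xR=Rx\}$; $U(R)$ is the set of units of $R$. *)

From HB Require Import structures.
From mathcomp Require Import all_boot all_order all_algebra.
Set Implicit Arguments. Unset Strict Implicit. Unset Printing Implicit Defensive.
Import GRing.Theory.
Local Open Scope ring_scope.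

Definition is_division_ring (D : unitRingType) : Prop :=
  forall x : D, x != 0 -> x \is a GRing.unit.

Definition is_subring (D : unitRingType) (R : D -> Prop) : Prop :=
  R 1 /\ (forall x y, R x -> R y -> R (x - y)) /\ (forall x y, R x -> R y -> R (x * y)).

Definition is_proper (D : unitRingType) (R : D -> Prop) : Prop := exists x, ~ R x.

Definition is_maximal_subring (D : unitRingType) (R : D -> Prop) : Prop :=
  is_subring R /\ is_proper R /\
  forall S : D -> Prop, is_subring S -> is_proper S ->
    (forall x, R x -> S x) -> forall x, S x -> R x.

Definition Nl (D : unitRingType) (R : D -> Prop) (x : D) : Prop :=
  forall r, R r -> exists r', R r' /\ r * x = x * r'.
Definition Nr (D : unitRingType) (R : D -> Prop) (x : D) : Prop :=
  forall r, R r -> exists r', R r' /\ x * r = r' * x.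
Definition Nn (D : unitRingType) (R : D -> Prop) (x : D) : Prop :=
  Nl R x /\ Nr R x.
Definition UR (D : unitRingType) (R : D -> Prop) (x : D) : Prop :=
  R x /\ exists y, R y /\ x * y = 1 /\ y * x = 1.

(** For a unit [x] of [D], [x] lies in [N_r(R)] iff [x R x^-1 ⊆ R], and in
    [N_l(R)] iff [x^-1 R x ⊆ R], i.e. iff [x^-1] lies in [N_r(R)].  When [R] is
    maximal, [x R x^-1 ⊆ R] forces equality: [{d | x d x^-1 ∈ R}] is a proper
    subring containing [R].  Hence [N_l(R) = N_r(R)] is closed under inversion
    of nonzero elements, so if no [λ ∉ R] satisfies [λ R ⊆ R λ], every nonzero
    element of [N_l(R)] lies in [R] together with its inverse. *)

From mathcomp Require Import all_boot all_order all_algebra.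
From Stdlib Require Import Classical.
Import GRing.Theory.
Local Open Scope ring_scope.

Section Normalizers.
Variables (D : unitRingType) (R : D -> Prop).

Lemma Nr_unitE (x : D) : x \is a GRing.unit ->
  Nr R x <-> (forall r, R r -> R (x * r / x)).
Proof.
move=> ux; split=> [Nx r Rr | Rc r Rr].
- by have [r' [Rr' ->]] := Nx r Rr; rewrite mulrK.
- by exists (x * r / x); rewrite divrK //; split; first exact: Rc.
Qed.

Lemma Nl_unitE (x : D) : x \is a GRing.unit ->
  Nl R x <-> (forall r, R r -> R (x^-1 * r * x)).
Proof.
move=> ux; split=> [Nx r Rr | Rc r Rr].
- by have [r' [Rr' e]] := Nx r Rr; rewrite -mulrA e mulKr.
- by exists (x^-1 * r * x); split; [exact: Rc | rewrite !mulrA mulrV ?mul1r].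
Qed.

Lemma Nl_NrV (x : D) : x \is a GRing.unit -> Nl R x <-> Nr R x^-1.
Proof. by move=> ux; rewrite Nl_unitE // Nr_unitE ?unitrV // invrK. Qed.

Lemma Nl0 : Nl R 0.
Proof. by move=> r Rr; exists r; rewrite mulr0 mul0r. Qed.

Lemma Nr0 : Nr R 0.
Proof. by move=> r Rr; exists r; rewrite mulr0 mul0r. Qed.

Hypothesis subR : is_subring R.

Lemma UR_Nr (x : D) : UR R x -> Nr R x.
Proof.
case: subR => _ [_ RM] [Rx [y [Ry [xy yx]]]] r Rr.
by exists (x * r * y); split; [apply/RM/Ry/RM | rewrite -!mulrA yx mulr1].
Qed.

End Normalizers.

Section MaximalSubring.
Variables (D : unitRingType) (R : D -> Prop).
Hypothesis maxR : is_maximal_subring R.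

Lemma maximal_subring_conjV (u : D) : u \is a GRing.unit ->
  (forall r, R r -> R (u * r / u)) -> forall r, R r -> R (u^-1 * r * u).
Proof.
move=> uu Rconj r Rr.
case: maxR => [[R1 [RB RM]] [[z Rz] Rmax]].
pose S d := R (u * d / u).
have conjK d : u * (u^-1 * d * u) / u = d by rewrite !mulrA mulrV // mul1r mulrK.
have subS : is_subring S.
  split; first by rewrite /S mulr1 divrr.
  split=> a b Sa Sb; rewrite /S; first by rewrite mulrBr mulrBl; apply: RB.
  have -> : u * (a * b) / u = (u * a / u) * (u * b / u) by rewrite !mulrA divrK.
  exact: RM.
have properS : is_proper S.
  by exists (u^-1 * z * u); rewrite /S conjK.
by apply: (Rmax S subS properS Rconj); rewrite /S conjK.
Qed.

Hypothesis divD : is_division_ring D.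

Lemma maximal_Nl_Nr (x : D) : Nl R x <-> Nr R x.
Proof.
have [-> | x0] := eqVneq x 0; first by split=> _; [apply: Nr0 | apply: Nl0].
have ux := divD _ x0; rewrite Nl_unitE // Nr_unitE //.
split=> Rconj; last exact: maximal_subring_conjV.
by rewrite -{1}[x]invrK; apply: maximal_subring_conjV; rewrite ?unitrV ?invrK.
Qed.

Hypothesis NrR : forall x, Nr R x -> R x.

Lemma Nr_UR (x : D) : Nr R x -> UR R x \/ x = 0.
Proof.
have [-> | x0] := eqVneq x 0; [by right | move=> Nx; left].
have ux := divD _ x0.
have NxV : Nr R x^-1 by rewrite -Nl_NrV // maximal_Nl_Nr.
split; first exact: NrR.
by exists x^-1; split; [exact: NrR | rewrite mulrV ?mulVr].
Qed.

End MaximalSubring.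

Theorem lemma2p2 (D : unitRingType) (R : D -> Prop) :
  is_division_ring D -> is_maximal_subring R ->
  (exists lam : D, ~ R lam /\
     (forall r, R r -> exists r', R r' /\ lam * r = r' * lam))
  \/
  (forall x : D,
     (Nl R x <-> (UR R x \/ x = 0)) /\
     (Nr R x <-> (UR R x \/ x = 0)) /\
     (Nn R x <-> (UR R x \/ x = 0))).
Proof.
move=> divD maxR.
have [|noLam] := classic (exists lam, ~ R lam /\ Nr R lam); first by left.
right; have NrR x : Nr R x -> R x by move=> Nx; apply: NNPP => Rx; apply: noLam; exists x.
have subR := maxR.1.
have NrE x : Nr R x <-> UR R x \/ x = 0.
  split; first exact: Nr_UR.
  by case=> [/(@UR_Nr _ _ subR) | ->] //; apply: Nr0.
by move=> x; rewrite /Nn maximal_Nl_Nr // NrE; tauto.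
Qed.
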